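(* Let $J'=(z_w,z_w')$ be a nonempty open interval, let $r:J'\to\mathbb{R}$ be differentiable, non-increasing, with $|r(z)|<1$ on $J'$, and suppose $r$ has a unique zero $z_r\in J'$. Let $h:J'\to\mathbb{R}$ be differentiable with $\dot h(z)=1+h(z)^2-2r(z)h(z)$ on $J'$, having exactly one zero $z_*\in J'$. Let $G(z)=z-\dfrac{2h(z)}{2+h(z)^2-2r(z)h(z)}$. Then for every initial guess $z_0$ in the closed interval with endpoints $z_r$ and $z_*$ (in particular for $z_0=z_r$), the iteration $z_{n+1}=G(z_n)$ is well defined and $(z_n)$ converges monotonically to $z_*$.
   Context: $\dot{}$ denotes differentiation with respect to $z$. ''Converges monotonically'' means all iterates lie in $J'$, the sequence is monotone, and its limit is $z_*$. *)

From Stdlib Require Export Reals.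
Open Scope R_scope.

Definition Gden (r h : R -> R) (z : R) : R := 2 + (h z) ^ 2 - 2 * r z * h z.

Definition Gmap (r h : R -> R) (z : R) : R := z - 2 * h z / Gden r h z.

Fixpoint Giter (r h : R -> R) (z0 : R) (n : nat) : R :=
  match n with
  | O => z0
  | S m => Gmap r h (Giter r h z0 m)
  end.

From Stdlib Require Import Reals Lra Psatz.
Open Scope R_scope.

(* G(z) = psi_{r(z)}(z), where psi_rho(s) = s - 2 h(s) / (2 + h(s)^2 - 2 rho h(s))
   (that is, [Gmap (fun _ => rho) h]) freezes the coefficient of the denominator.
   Since h' = (h - r)^2 + 1 - r^2 > 0, h is increasing, hence h <= 0 on the left
   of z_s and h >= 0 on its right.  For z <= z_s, monotonicity of r gives
   r(z) h <= r h on [z, z_s]; this makes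
   psi' = 1 - 2 h' (2 - h^2) / (2 + h^2 - 2 r(z) h)^2 nonnegative there, so
   z <= G(z) <= psi_{r(z)}(z_s) = z_s (and symmetrically on the right of z_s).
   The iterates are therefore monotone and bounded, and their limit is a fixed
   point of the continuous map G, i.e. a zero of h, i.e. z_s.  This argument
   works for every z_0 in J'. *)

Lemma riccati_rhs_pos (r0 x : R) : -1 < r0 < 1 -> 0 < 1 + x ^ 2 - 2 * r0 * x.
Proof. intros r0_in; pose proof (pow2_ge_0 (x - r0)); nra. Qed.

Lemma Gden_pos (r h : R -> R) (z : R) : -1 < r z < 1 -> 0 < Gden r h z.
Proof. intros rz_in; pose proof (riccati_rhs_pos _ (h z) rz_in); unfold Gden; lra. Qed.

Lemma Gmap_root (r h : R -> R) (z : R) : h z = 0 -> Gmap r h z = z.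
Proof. intros hz; unfold Gmap; rewrite hz; unfold Rdiv; ring. Qed.

Lemma derivable_pt_lim_Gmap_const (h : R -> R) (r0 t d : R) :
  derivable_pt_lim h t d -> Gden (fun _ => r0) h t <> 0 ->
  derivable_pt_lim (Gmap (fun _ => r0) h) t
    (1 - 2 * d * (2 - h t ^ 2) / Gden (fun _ => r0) h t ^ 2).
Proof.
  intros hd den_neq0.
  assert (den_eq : Gden (fun _ => r0) h t = 2 + h t * h t - 2 * r0 * h t)
    by (unfold Gden; ring).
  rewrite den_eq in den_neq0 |- *.
  pose proof (derivable_pt_lim_minus _ _ t _ _
    (derivable_pt_lim_plus _ _ t _ _ (derivable_pt_lim_const 2 t)
       (derivable_pt_lim_mult _ _ t _ _ hd hd))
    (derivable_pt_lim_scal _ (2 * r0) t _ hd)) as den_d.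
  pose proof (derivable_pt_lim_div _ _ t _ _
    (derivable_pt_lim_scal _ 2 t _ hd) den_d den_neq0) as quot_d.
  pose proof (derivable_pt_lim_minus _ _ t _ _ (derivable_pt_lim_id t) quot_d) as G_d.
  unfold minus_fct, plus_fct, mult_fct, mult_real_fct, div_fct, fct_cte, id in G_d.
  replace (1 - 2 * d * (2 - h t ^ 2) / (2 + h t * h t - 2 * r0 * h t) ^ 2) with
      (1 - (2 * d * (2 + h t * h t - 2 * r0 * h t) -
            (0 + (d * h t + h t * d) - 2 * r0 * d) * (2 * h t)) /
           Rsqr (2 + h t * h t - 2 * r0 * h t))
    by (unfold Rsqr; field; exact den_neq0).
  refine (derivable_pt_lim_ext _ _ _ _ _ G_d).
  intros z; unfold Gmap, Gden; simpl; rewrite Rmult_1_r; reflexivity.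
Qed.

Lemma Gmap_const_derivative_nonneg (r0 x d : R) :
  -1 < r0 < 1 -> 0 <= d -> d <= 1 + x ^ 2 - 2 * r0 * x ->
  0 <= 1 - 2 * d * (2 - x ^ 2) / (2 + x ^ 2 - 2 * r0 * x) ^ 2.
Proof.
  intros r0_in d_ge0 d_le.
  set (E := 2 + x ^ 2 - 2 * r0 * x) in *.
  assert (E_pos : 0 < E) by (pose proof (riccati_rhs_pos r0 x r0_in); unfold E; lra).
  assert (d_le' : d <= E - 1) by (unfold E; lra).
  clearbody E.
  (* [E^2 - 2 (E - 1) (2 - x^2) = (E - 2 + x^2)^2 + x^2 (2 - x^2)] *)
  assert (num_le : 2 * d * (2 - x ^ 2) <= E ^ 2).
  { destruct (Rle_dec (x ^ 2) 2) as [x2_le | x2_gt].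
    - assert (0 <= (E - 2 + x ^ 2) ^ 2) by apply pow2_ge_0.
      assert (0 <= x ^ 2 * (2 - x ^ 2)) by (apply Rmult_le_pos; [apply pow2_ge_0 | lra]).
      assert (d * (2 - x ^ 2) <= (E - 1) * (2 - x ^ 2)) by (apply Rmult_le_compat_r; lra).
      nra.
    - assert (0 <= d * (x ^ 2 - 2)) by (apply Rmult_le_pos; lra).
      pose proof (pow2_ge_0 E); nra. }
  assert (E2_pos : 0 < E ^ 2) by (apply pow_lt; exact E_pos).
  apply (Rmult_le_reg_r (E ^ 2)); [exact E2_pos|].
  unfold Rdiv; rewrite Rmult_0_l, Rmult_minus_distr_r, Rmult_assoc, Rinv_l by lra.
  lra.
Qed.

Lemma nondecreasing_of_derivative_nonneg (f f' : R -> R) (a b : R) :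
  a <= b -> (forall c, a <= c <= b -> derivable_pt_lim f c (f' c)) ->
  (forall c, a <= c <= b -> 0 <= f' c) -> f a <= f b.
Proof.
  intros [a_lt | ->] f_der f'_ge0; [|lra].
  destruct (MVT_cor2 f f' a b a_lt f_der) as [c [mvt c_in]].
  pose proof (f'_ge0 c ltac:(lra)); nra.
Qed.

Lemma growing_iteration_cv (f : R -> R) (u : nat -> R) (b : R) :
  (forall n, u (S n) = f (u n)) -> u 0%nat <= b ->
  (forall z, u 0%nat <= z <= b -> z <= f z <= b) ->
  (forall z, u 0%nat <= z <= b -> continuity_pt f z) ->
  (forall z, u 0%nat <= z <= b -> f z = z -> z = b) ->
  Un_growing u /\ (forall n, u 0%nat <= u n <= b) /\ Un_cv u b.
Proof.
  intros u_rec u0_le f_up f_cont f_fixed.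
  assert (u_bnd : forall n, u 0%nat <= u n <= b).
  { induction n as [|n IH]; [lra|].
    rewrite u_rec; pose proof (f_up _ IH); lra. }
  assert (u_grow : Un_growing u).
  { intros n; rewrite u_rec; apply f_up, u_bnd. }
  destruct (growing_cv u u_grow) as [l u_cv].
  { exists b; intros x [n ->]; apply u_bnd. }
  assert (l_bnd : u 0%nat <= l <= b).
  { split; [exact (growing_ineq u l u_grow u_cv 0%nat)|].
    apply (Rle_cv_lim (Un := u) (Vn := fun _ => b)); [apply u_bnd | assumption |].
    intros eps eps_pos; exists 0%nat; intros; rewrite R_dist_eq; lra. }
  assert (f_l : f l = l).
  { apply (UL_sequence (fun n => f (u n))).
    - apply continuity_seq; [apply f_cont, l_bnd | exact u_cv].
    - apply (Un_cv_ext (fun n => u (n + 1)%nat)).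
      + intros n; rewrite Nat.add_1_r; apply u_rec.
      + apply CV_shift'; exact u_cv. }
  pose proof (f_fixed l l_bnd f_l) as l_eq; subst l; auto.
Qed.

Lemma decreasing_iteration_cv (f : R -> R) (u : nat -> R) (b : R) :
  (forall n, u (S n) = f (u n)) -> b <= u 0%nat ->
  (forall z, b <= z <= u 0%nat -> b <= f z <= z) ->
  (forall z, b <= z <= u 0%nat -> continuity_pt f z) ->
  (forall z, b <= z <= u 0%nat -> f z = z -> z = b) ->
  Un_decreasing u /\ (forall n, b <= u n <= u 0%nat) /\ Un_cv u b.
Proof.
  intros u_rec u0_ge f_down f_cont f_fixed.
  destruct (growing_iteration_cv (fun x => - f (- x)) (fun n => - u n) (- b))
    as [v_grow [v_bnd v_cv]].
  - intros n; simpl; rewrite u_rec, Ropp_involutive; reflexivity.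
  - lra.
  - intros z z_in; pose proof (f_down (- z) ltac:(lra)); lra.
  - intros z z_in.
    apply (continuity_pt_opp (comp f Ropp)), continuity_pt_comp.
    + apply (continuity_pt_opp id), derivable_continuous_pt, derivable_pt_id.
    + apply f_cont; unfold id; lra.
  - intros z z_in fz; pose proof (f_fixed (- z) ltac:(lra) ltac:(lra)); lra.
  - split; [|split].
    + intros n; pose proof (v_grow n); simpl in *; lra.
    + intros n; pose proof (v_bnd n); lra.
    + intros eps eps_pos; destruct (v_cv eps eps_pos) as [N HN].
      exists N; intros n n_ge; specialize (HN n n_ge).
      unfold R_dist in *; rewrite <- Rabs_Ropp.
      replace (- (u n - b)) with (- u n - - b) by ring.
      exact HN.
Qed.

Section RiccatiNewton.

Variables (zw zw' zs : R) (r h : R -> R).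

Hypothesis r_bounded : forall z, zw < z < zw' -> -1 < r z < 1.
Hypothesis r_nonincreasing :
  forall x y, zw < x < zw' -> zw < y < zw' -> x <= y -> r y <= r x.
Hypothesis r_derivable : forall z, zw < z < zw' -> exists d, derivable_pt_lim r z d.
Hypothesis h_riccati : forall z, zw < z < zw' ->
  derivable_pt_lim h z (1 + h z ^ 2 - 2 * r z * h z).
Hypothesis zs_in : zw < zs < zw'.
Hypothesis h_zs : h zs = 0.
Hypothesis h_zero_unique : forall z, zw < z < zw' -> h z = 0 -> z = zs.

Lemma h_nondecreasing (a b : R) : zw < a -> a <= b -> b < zw' -> h a <= h b.
Proof.
  intros a_gt a_le_b b_lt.
  apply (nondecreasing_of_derivative_nonneg h (fun c => 1 + h c ^ 2 - 2 * r c * h c));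
    [exact a_le_b | intros c c_in; apply h_riccati; lra |].
  intros c c_in; apply Rlt_le, riccati_rhs_pos, r_bounded; lra.
Qed.

Lemma h_nonpos (z : R) : zw < z <= zs -> h z <= 0.
Proof. intros z_in; rewrite <- h_zs; apply h_nondecreasing; lra. Qed.

Lemma h_nonneg (z : R) : zs <= z < zw' -> 0 <= h z.
Proof. intros z_in; rewrite <- h_zs; apply h_nondecreasing; lra. Qed.

Lemma Gmap_const_le (r0 a b : R) :
  zw < a -> a <= b -> b < zw' -> -1 < r0 < 1 ->
  (forall c, a <= c <= b -> r0 * h c <= r c * h c) ->
  Gmap (fun _ => r0) h a <= Gmap (fun _ => r0) h b.
Proof.
  intros a_gt a_le_b b_lt r0_in rh_le.
  apply (nondecreasing_of_derivative_nonneg _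
    (fun c => 1 - 2 * (1 + h c ^ 2 - 2 * r c * h c) * (2 - h c ^ 2) /
              Gden (fun _ => r0) h c ^ 2)); [exact a_le_b | |].
  - intros c c_in; apply derivable_pt_lim_Gmap_const; [apply h_riccati; lra|].
    apply Rgt_not_eq, (Gden_pos (fun _ => r0)); exact r0_in.
  - intros c c_in; apply Gmap_const_derivative_nonneg; [exact r0_in | |].
    + apply Rlt_le, riccati_rhs_pos, r_bounded; lra.
    + pose proof (rh_le c c_in); lra.
Qed.

Lemma Gmap_left (z : R) : zw < z <= zs -> z <= Gmap r h z <= zs.
Proof.
  intros z_in; split.
  - pose proof (h_nonpos z z_in); pose proof (Gden_pos r h z (r_bounded z ltac:(lra))).
    assert (0 < / Gden r h z) by (apply Rinv_0_lt_compat; lra).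
    unfold Gmap, Rdiv; nra.
  - change (Gmap (fun _ => r z) h z <= zs).
    rewrite <- (Gmap_root (fun _ => r z) h zs h_zs).
    apply Gmap_const_le; try lra; [apply r_bounded; lra|].
    intros c c_in; pose proof (h_nonpos c ltac:(lra)).
    pose proof (r_nonincreasing z c ltac:(lra) ltac:(lra) ltac:(lra)); nra.
Qed.

Lemma Gmap_right (z : R) : zs <= z < zw' -> zs <= Gmap r h z <= z.
Proof.
  intros z_in; split.
  - change (zs <= Gmap (fun _ => r z) h z).
    rewrite <- (Gmap_root (fun _ => r z) h zs h_zs) at 1.
    apply Gmap_const_le; try lra; [apply r_bounded; lra|].
    intros c c_in; pose proof (h_nonneg c ltac:(lra)).
    pose proof (r_nonincreasing c z ltac:(lra) ltac:(lra) ltac:(lra)); nra.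
  - pose proof (h_nonneg z z_in); pose proof (Gden_pos r h z (r_bounded z ltac:(lra))).
    assert (0 < / Gden r h z) by (apply Rinv_0_lt_compat; lra).
    unfold Gmap, Rdiv; nra.
Qed.

Lemma Gmap_continuity_pt (z : R) : zw < z < zw' -> continuity_pt (Gmap r h) z.
Proof.
  intros z_in.
  assert (h_cont : continuity_pt h z).
  { apply derivable_continuous_pt; eexists; apply h_riccati, z_in. }
  assert (r_cont : continuity_pt r z).
  { destruct (r_derivable z z_in) as [d r_d].
    apply derivable_continuous_pt; exists d; exact r_d. }
  assert (den_cont : continuity_pt (Gden r h) z).
  { apply (continuity_pt_minus (fun s => 2 + h s ^ 2) (fun s => 2 * r s * h s)).
    - apply (continuity_pt_plus (fct_cte 2) (fun s => h s ^ 2)).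
      + apply continuity_pt_const; intros x y; reflexivity.
      + apply (continuity_pt_comp h (fun x => x ^ 2)); [exact h_cont|].
        apply derivable_continuous_pt, derivable_pt_pow.
    - apply (continuity_pt_mult (fun s => 2 * r s) h); [|exact h_cont].
      apply (continuity_pt_scal r 2), r_cont. }
  apply (continuity_pt_minus id (fun s => 2 * h s / Gden r h s)).
  - apply derivable_continuous_pt, derivable_pt_id.
  - apply (continuity_pt_div (fun s => 2 * h s) (Gden r h)); [| exact den_cont |].
    + apply (continuity_pt_scal h 2), h_cont.
    + apply Rgt_not_eq, Gden_pos, r_bounded, z_in.
Qed.

Lemma Gmap_fixed_point (z : R) : zw < z < zw' -> Gmap r h z = z -> z = zs.
Proof.
  intros z_in Gz; apply h_zero_unique; [exact z_in|].
  pose proof (Gden_pos r h z (r_bounded z z_in)).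
  unfold Gmap in Gz.
  assert (quot0 : 2 * h z / Gden r h z = 0) by lra.
  apply (f_equal (Rmult (Gden r h z / 2))) in quot0.
  field_simplify in quot0; lra.
Qed.

End RiccatiNewton.

Theorem theorem3p5 (zw zw' : R) (r h : R -> R) (zr zs : R) :
  zw < zw' ->
  (forall z, zw < z < zw' -> exists d, derivable_pt_lim r z d) ->
  (forall x y, zw < x < zw' -> zw < y < zw' -> x <= y -> r y <= r x) ->
  (forall z, zw < z < zw' -> Rabs (r z) < 1) ->
  zw < zr < zw' -> r zr = 0 ->
  (forall z, zw < z < zw' -> r z = 0 -> z = zr) ->
  (forall z, zw < z < zw' ->
     derivable_pt_lim h z (1 + (h z) ^ 2 - 2 * r z * h z)) ->
  zw < zs < zw' -> h zs = 0 ->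
  (forall z, zw < z < zw' -> h z = 0 -> z = zs) ->
  forall z0, Rmin zr zs <= z0 <= Rmax zr zs ->
    (forall n, zw < Giter r h z0 n < zw' /\ Gden r h (Giter r h z0 n) <> 0) /\
    (Un_growing (Giter r h z0) \/ Un_decreasing (Giter r h z0)) /\
    Un_cv (Giter r h z0) zs.
Proof.
  intros _ r_der r_noninc r_abs zr_in _ _ h_der zs_in h_zs h_zero z0 z0_between.
  assert (r_bnd : forall z, zw < z < zw' -> -1 < r z < 1).
  { intros z z_in; pose proof (Rabs_def2 _ _ (r_abs z z_in)); lra. }
  assert (z0_in : zw < z0 < zw').
  { revert z0_between; unfold Rmin, Rmax; destruct (Rle_dec zr zs); lra. }
  assert (iterates : (forall n, zw < Giter r h z0 n < zw') /\
    (Un_growing (Giter r h z0) \/ Un_decreasing (Giter r h z0)) /\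
    Un_cv (Giter r h z0) zs).
  { destruct (Rle_dec z0 zs) as [z0_le | z0_gt].
    - destruct (growing_iteration_cv (Gmap r h) (Giter r h z0) zs)
        as [grow [bnd cv]]; simpl; auto.
      + intros z z_in; apply (Gmap_left zw zw' zs); auto; lra.
      + intros z z_in; apply (Gmap_continuity_pt zw zw'); auto; lra.
      + intros z z_in; apply (Gmap_fixed_point zw zw'); auto; lra.
      + split; [|auto]; intros n; pose proof (bnd n); simpl in *; lra.
    - destruct (decreasing_iteration_cv (Gmap r h) (Giter r h z0) zs)
        as [decr [bnd cv]]; simpl; auto; try lra.
      + intros z z_in; apply (Gmap_right zw zw' zs); auto; lra.
      + intros z z_in; apply (Gmap_continuity_pt zw zw'); auto; lra.
      + intros z z_in; apply (Gmap_fixed_point zw zw'); auto; lra.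
      + split; [|auto]; intros n; pose proof (bnd n); simpl in *; lra. }
  destruct iterates as [stay rest]; split; [|exact rest].
  intros n; split; [exact (stay n)|].
  apply Rgt_not_eq, Gden_pos, r_bnd, stay.
Qed.
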